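(* Consider the online multiple testing protocol described in the context, in a stationary environment in which the true states $Y_1,Y_2,\dots$ are i.i.d. $\mathrm{Bernoulli}(1-\pi)$ for a constant $\pi\in(0,1)$ (so $\mathbb{P}(Y_t=0)=\pi$). Let $\beta\in(0,1]$ and $\lambda_\beta:=G^{-1}(\beta)>0$. Suppose the algorithm maintains minimum detection power $\beta$, i.e. $G(\lambda_t)\ge\beta$, equivalently $\lambda_t\ge\lambda_\beta$, almost surely for all $t$. Then for every $T\ge1$ and all $a,b>0$, $$\mathbb{E}[\mathrm{Regret}_T(a,b)]\ \ge\ a\,\pi\,\lambda_\beta\,T=\Omega(T),$$ and moreover $$\liminf_{T\to\infty}\frac1T\,\mathrm{Regret}_T(a,b)\ \ge\ a\,\pi\,\lambda_\beta\quad\text{almost surely.}$$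
   Context: Online multiple testing protocol: at each round $t=1,2,\dots$ the environment has a true state $Y_t\in\{0,1\}$ ($0$ = null, $1$ = alternative) and reveals a $p$-value $p_t\in[0,1]$; conditionally on the states and on the past, $p_t\sim\mathrm{Uniform}[0,1]$ if $Y_t=0$ and $p_t\sim G$ if $Y_t=1$, independently of past $p$-values and decisions. Here $G:[0,1]\to[0,1]$ is a continuous, strictly increasing CDF with $G(0)=0$, $G(1)=1$. With $\mathcal{F}_{t-1}=\sigma((p_s,\lambda_s,\delta_s):s\le t-1)$, the algorithm chooses an $\mathcal{F}_{t-1}$-measurable threshold $\lambda_t\in[0,1]$ and decides $\delta_t=\mathbf{1}\{p_t\le\lambda_t\}$ (reject iff $\delta_t=1$). Define false positives $V_T=\sum_{t=1}^T\mathbf{1}\{Y_t=0,\delta_t=1\}$, false negatives $M_T=\sum_{t=1}^T\mathbf{1}\{Y_t=1,\delta_t=0\}$, and for weights $a,b>0$ the Weighted Regret $\mathrm{Regret}_T(a,b)=a V_T+b M_T$. *)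

From HB Require Import structures.
From mathcomp Require Import all_boot all_order all_algebra.
From mathcomp Require Import all_classical all_reals all_analysis.
Set Implicit Arguments. Unset Strict Implicit. Unset Printing Implicit Defensive.
Import Order.TTheory GRing.Theory Num.Theory.
Import numFieldNormedType.Exports.
Local Open Scope classical_set_scope.
Local Open Scope ring_scope.

(* Rounds are indexed t = 0,1,2,... (round t here = round t+1 of the paper). *)

Section Defs.
Context {R : realType} {T : Type}.

Definition decision (p lam : nat -> T -> R) (t : nat) (w : T) : bool :=
  p t w <= lam t w.

Definition false_pos (Y : nat -> T -> bool) (p lam : nat -> T -> R) (n : nat) (w : T) : R :=
  \sum_(t < n) ((~~ Y t w) && decision p lam t w)%:R.

Definition false_neg (Y : nat -> T -> bool) (p lam : nat -> T -> R) (n : nat) (w : T) : R :=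
  \sum_(t < n) (Y t w && ~~ decision p lam t w)%:R.

Definition weighted_regret (a b : R) Y p lam (n : nat) (w : T) : R :=
  a * false_pos Y p lam n w + b * false_neg Y p lam n w.

(* generators of the past sigma-algebra F_{t-1} = sigma(p_s, lambda_s, delta_s : s < t) *)
Definition past_gen (p lam : nat -> T -> R) (t : nat) : set (set T) :=
  [set A | exists s x, (s < t)%N /\ A = [set w | p s w <= x]] `|`
  [set A | exists s x, (s < t)%N /\ A = [set w | lam s w <= x]] `|`
  [set A | exists s, (s < t)%N /\ A = [set w | decision p lam s w]].

Definition states_gen (Y : nat -> T -> bool) : set (set T) :=
  [set A | exists s b, A = [set w | Y s w = b]].

Definition cond_sigma Y (p lam : nat -> T -> R) (t : nat) : set (set T) :=
  <<s states_gen Y `|` past_gen p lam t >>.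

End Defs.

(* The online multiple testing protocol, in the stationary environment:
   Y_t i.i.d. Bernoulli(1 - pi); conditionally on all states and on the past,
   p_t ~ Unif[0,1] if Y_t = 0 and p_t ~ G if Y_t = 1; lambda_t predictable. *)
Definition stationary_protocol {R : realType} (d : measure_display)
  (T : measurableType d) (P : probability T R) (pi : R) (G : R -> R)
  (Y : nat -> T -> bool) (p lam : nat -> T -> R) : Prop :=
  (forall t, measurable [set w | Y t w = true]) /\
      (forall t, measurable_fun setT (p t)) /\
      (forall t, measurable_fun setT (lam t)) /\
      (forall t w, 0 <= p t w <= 1) /\
      (forall t w, 0 <= lam t w <= 1) /\
      (forall (n : nat) (bs : nat -> bool),
          P [set w | forall s, (s < n)%N -> Y s w = bs s] =
          (\prod_(s < n) (if bs s then 1 - pi else pi))%:E) /\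
      (forall t (B : set R), measurable B -> <<s past_gen p lam t >> (lam t @^-1` B)) /\
      (forall t A x, cond_sigma Y p lam t A -> 0 <= x <= 1 ->
          P (A `&` [set w | Y t w = false] `&` [set w | p t w <= x]) =
            (x%:E * P (A `&` [set w | Y t w = false]))%E /\
          P (A `&` [set w | Y t w = true] `&` [set w | p t w <= x]) =
            ((G x)%:E * P (A `&` [set w | Y t w = true]))%E).

From HB Require Import structures.
From mathcomp Require Import all_boot all_order all_algebra.
From mathcomp Require Import all_classical all_reals all_analysis.
From mathcomp Require Import measurable_realfun ring lra.
Set Implicit Arguments. Unset Strict Implicit. Unset Printing Implicit Defensive.
Import Order.TTheory GRing.Theory Num.Theory.
Import numFieldNormedType.Exports.
Local Open Scope classical_set_scope.
Local Open Scope ring_scope.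

(* Since G is increasing, the power constraint forces lambda_t >= lambda_beta, so
   every round with Y_t = 0 and p_t <= lambda_beta is a false rejection.  These rounds
   have probability pi * lambda_beta each, which gives the bound in expectation.  For
   the almost sure bound, split
     1{Y_t = 0, p_t <= lambda_beta} - pi lambda_beta
       = (1{Y_t = 0, p_t <= lambda_beta} - lambda_beta 1{Y_t = 0})
         + lambda_beta (1{Y_t = 0} - pi).
   The first summand is a martingale difference sequence for the past together with all
   the states, the second one for the states alone; both are bounded, so a fourth moment
   bound and Borel-Cantelli give a one-sided strong law of large numbers for each. *)

Definition partial_sum {R : realType} {T : Type} (X : nat -> T -> R) n w :=
  \sum_(t < n) X t w.

Lemma partial_sum0 {R : realType} {T : Type} (X : nat -> T -> R) :
  partial_sum X 0 = cst 0.
Proof. by apply: funext => w; rewrite /partial_sum big_ord0. Qed.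

Lemma partial_sumS {R : realType} {T : Type} (X : nat -> T -> R) n :
  partial_sum X n.+1 = partial_sum X n \+ X n.
Proof. by apply: funext => w; rewrite /partial_sum big_ord_recr. Qed.

Section bounded_expectation.
Context {R : realType} {d : measure_display} {T : measurableType d}.
Variable P : probability T R.

Definition bounded_measurable (f : T -> R) :=
  measurable_fun setT f /\ exists M, forall w, `|f w| <= M.

(* Real-valued expectation; it is 0 when 'E_P[f] is infinite, so we only use it for
   bounded measurable [f]. *)
Definition expect (f : T -> R) : R := fine 'E_P[f].

Lemma bounded_measurable_Lfun1 f : bounded_measurable f -> f \in Lfun P 1.
Proof.
move=> [mf [M fM]]; apply/Lfun1_integrable.
apply: measurable_bounded_integrable => //.
  by rewrite (le_lt_trans (probability_le1 P measurableT)) ?ltry.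
exists M; split; first exact: num_real.
by move=> x Mx y _ /=; apply: le_trans (fM y) (ltW Mx).
Qed.

Lemma expectationE f : bounded_measurable f -> 'E_P[f]%E = (expect f)%:E.
Proof.
by move=> bf; rewrite fineK// expectation_fin_num// bounded_measurable_Lfun1.
Qed.

Lemma bounded_measurable_cst c : bounded_measurable (cst c).
Proof. by split => //; exists `|c|. Qed.

Lemma bounded_measurable_indic A : measurable A -> bounded_measurable \1_A.
Proof.
move=> mA; split; first exact: measurable_indic.
by exists 1 => w; rewrite indicE; case: (w \in A); rewrite ?normr1 ?normr0.
Qed.

Lemma bounded_measurableD f g :
  bounded_measurable f -> bounded_measurable g -> bounded_measurable (f \+ g).
Proof.
move=> [mf [M fM]] [mg [N gN]]; split; first exact: measurable_funD.
by exists (M + N) => w; rewrite (le_trans (ler_normD _ _))// lerD.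
Qed.

Lemma bounded_measurableM f g :
  bounded_measurable f -> bounded_measurable g -> bounded_measurable (f \* g).
Proof.
move=> [mf [M fM]] [mg [N gN]]; split; first exact: measurable_funM.
by exists (M * N) => w /=; rewrite normrM ler_pM.
Qed.

Lemma bounded_measurableZ c f :
  bounded_measurable f -> bounded_measurable (fun w => c * f w).
Proof. exact: bounded_measurableM (bounded_measurable_cst c). Qed.

Lemma bounded_measurableX f k :
  bounded_measurable f -> bounded_measurable (fun w => f w ^+ k).
Proof.
move=> bf; elim: k => [|k IH].
  by under eq_fun do rewrite expr0; exact: bounded_measurable_cst.
by under eq_fun do rewrite exprSr; exact: bounded_measurableM.
Qed.

Lemma bounded_measurable_partial_sum X n : (forall t, bounded_measurable (X t)) ->
  bounded_measurable (partial_sum X n).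
Proof.
move=> bX; elim: n => [|n IH].
  by rewrite partial_sum0; exact: bounded_measurable_cst.
by rewrite partial_sumS; exact: bounded_measurableD.
Qed.

Lemma expect_cst c : expect (cst c) = c.
Proof. by rewrite /expect expectation_cst. Qed.

Lemma expect_indic A : measurable A -> expect \1_A = fine (P A).
Proof. by move=> mA; rewrite /expect expectation_indic. Qed.

Lemma expectD f g : bounded_measurable f -> bounded_measurable g ->
  expect (f \+ g) = expect f + expect g.
Proof.
by move=> bf bg; rewrite /expect expectationD ?bounded_measurable_Lfun1// !expectationE.
Qed.

Lemma expectZ c f : bounded_measurable f ->
  expect (fun w => c * f w) = c * expect f.
Proof.
move=> bf; rewrite /expect (_ : (fun w => c * f w) = c \o* f).
  by rewrite expectationZl ?bounded_measurable_Lfun1// expectationE.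
by apply: funext => w; rewrite /= mulrC.
Qed.

Lemma expect_ge0 f : (forall w, 0 <= f w) -> 0 <= expect f.
Proof. by move=> f0; rewrite fine_ge0// expectation_ge0. Qed.

Lemma expect_partial_sum X n : (forall t, bounded_measurable (X t)) ->
  expect (partial_sum X n) = \sum_(t < n) expect (X t).
Proof.
move=> bX; elim: n => [|n IH]; first by rewrite partial_sum0 expect_cst big_ord0.
rewrite partial_sumS expectD ?IH ?big_ord_recr//.
exact: bounded_measurable_partial_sum.
Qed.

Lemma expect_le f g : bounded_measurable f -> bounded_measurable g ->
  (forall w, f w <= g w) -> expect f <= expect g.
Proof.
move=> bf bg fg; rewrite -subr_ge0 -mulN1r -expectZ// -expectD//; last first.
  exact: bounded_measurableZ.
by apply: expect_ge0 => w /=; rewrite mulN1r subr_ge0.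
Qed.

Lemma expect_indicM_diff A B C (c : R) :
  measurable A -> measurable B -> measurable C ->
  expect (\1_A \* (fun w => \1_B w - c * \1_C w)) =
  fine (P (A `&` B)) - c * fine (P (A `&` C)).
Proof.
move=> mA mB mC; have mAB := measurableI _ _ mA mB; have mAC := measurableI _ _ mA mC.
have -> : \1_A \* (fun w => \1_B w - c * \1_C w) =
    \1_(A `&` B) \+ (fun w => - c * \1_(A `&` C) w).
  by apply: funext => w /=; rewrite !indicI /=; ring.
rewrite expectD ?expectZ ?expect_indic ?mulNr//;
  by [apply: bounded_measurable_indic|apply/bounded_measurableZ/bounded_measurable_indic].
Qed.

End bounded_expectation.

Ltac solve_bounded := repeat first
  [ done | exact: bounded_measurable_cst | apply: bounded_measurableD
  | apply: bounded_measurableZ | apply: bounded_measurableM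
  | apply: bounded_measurableX ].

Section indicator_span.
Context {R : realType} {d : measure_display} {T : measurableType d}.
Variable S : set (set T).
Hypothesis S_measurable : forall A, S A -> measurable A.
Hypothesis S_setI : setI_closed S.

Inductive indic_span : (T -> R) -> Prop :=
| indic_span0 : indic_span (fun _ => 0)
| indic_span_indic A : S A -> indic_span \1_A
| indic_spanD f g : indic_span f -> indic_span g -> indic_span (f \+ g)
| indic_spanZ c f : indic_span f -> indic_span (fun w => c * f w).

Lemma eq_indic_span f g : indic_span f -> f =1 g -> indic_span g.
Proof. by move=> sf /funext <-. Qed.

Lemma indic_span_bounded f : indic_span f -> bounded_measurable f.
Proof.
elim=> [|A SA|f1 g1 _ bf _ bg|c f1 _ bf].
- exact: bounded_measurable_cst.
- exact/bounded_measurable_indic/S_measurable.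
- exact: bounded_measurableD.
- exact: bounded_measurableZ.
Qed.

Lemma indic_span_sum (I : Type) (r : seq I) (F : I -> T -> R) :
  (forall i, indic_span (F i)) -> indic_span (fun w => \sum_(i <- r) F i w).
Proof.
move=> sF; elim: r => [|i r IH].
  by apply: (eq_indic_span indic_span0) => w; rewrite big_nil.
by apply: (eq_indic_span (indic_spanD (sF i) IH)) => w; rewrite big_cons.
Qed.

Lemma indic_span_indicM A g : S A -> indic_span g -> indic_span (\1_A \* g).
Proof.
move=> SA; elim=> [|B SB|f1 h _ sf _ sh|c f1 _ sf].
- by apply: (eq_indic_span indic_span0) => w /=; rewrite mulr0.
- by apply: (eq_indic_span (indic_span_indic (S_setI SA SB))) => w; rewrite indicI.
- by apply: (eq_indic_span (indic_spanD sf sh)) => w /=; rewrite mulrDr.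
- by apply: (eq_indic_span (indic_spanZ c sf)) => w /=; rewrite mulrCA.
Qed.

Lemma indic_spanM f g : indic_span f -> indic_span g -> indic_span (f \* g).
Proof.
elim=> [|A SA|f1 h _ sf _ sh|c f1 _ sf] sg.
- by apply: (eq_indic_span indic_span0) => w /=; rewrite mul0r.
- exact: indic_span_indicM.
- by apply: (eq_indic_span (indic_spanD (sf sg) (sh sg))) => w /=; rewrite mulrDl.
- by apply: (eq_indic_span (indic_spanZ c (sf sg))) => w /=; rewrite mulrA.
Qed.

Lemma expect_indic_spanM_eq0 (P : probability T R) X f : bounded_measurable X ->
  (forall A, S A -> expect P (\1_A \* X) = 0) ->
  indic_span f -> expect P (f \* X) = 0.
Proof.
move=> bX XS; elim=> [|A SA|f1 g sf Hf sg Hg|c f1 sf Hf].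
- have -> : (fun _ => 0) \* X = cst 0 by apply: funext => w /=; rewrite mul0r.
  exact: expect_cst.
- exact: XS.
- have -> : (f1 \+ g) \* X = (f1 \* X) \+ (g \* X).
    by apply: funext => w /=; rewrite mulrDl.
  rewrite expectD ?Hf ?Hg ?addr0//; apply: bounded_measurableM => //;
    exact: indic_span_bounded.
- have -> : (fun w => c * f1 w) \* X = (fun w => c * (f1 \* X) w).
    by apply: funext => w /=; rewrite mulrA.
  rewrite expectZ ?Hf ?mulr0//; apply: bounded_measurableM => //.
  exact: indic_span_bounded.
Qed.

End indicator_span.

Section measurable_comparison.
Context {R : realType} {d : measure_display} {T : measurableType d}.
Variables f g : T -> R.
Hypotheses (mf : measurable_fun setT f) (mg : measurable_fun setT g).

Lemma measurable_ltr : measurable [set w | f w < g w].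
Proof. by rewrite -[X in measurable X]setTI; exact: measurable_fun_ltr. Qed.

Lemma measurable_ler : measurable [set w | f w <= g w].
Proof. by rewrite -[X in measurable X]setTI; exact: measurable_fun_ler. Qed.

End measurable_comparison.

Lemma sum_inv_sqr_le {R : realType} k :
  \sum_(i < k) ((i.+1)%:R ^+ 2)^-1 <= 2 - 2 / (k.+1)%:R :> R.
Proof.
elim: k => [|k IH]; first by rewrite big_ord0 divr1 subrr.
rewrite big_ord_recr /= -[(k.+2)%:R]natr1.
set a := (k.+1)%:R in IH *; have a1 : 1 <= a by rewrite ler1n.
have a0 : 0 < a by apply: lt_le_trans a1.
have step : (a ^+ 2)^-1 <= 2 / a - 2 / (a + 1).
  have -> : 2 / a - 2 / (a + 1) = (a * (a + 1) / 2)^-1.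
    by field; rewrite gt_eqF ?ltr_wpDr// gt_eqF.
  rewrite lef_pV2 ?posrE ?exprn_gt0 ?divr_gt0 ?mulr_gt0 ?ltr_wpDr//.
  by rewrite ler_pdivrMr//; nra.
by apply: le_trans (lerD IH step) _; rewrite addrA subrK.
Qed.

(* A martingale difference sequence [X] bounded by 1, without conditional expectations:
   the past is described by intersection-stable families [F n] of events, the earlier
   [X t] lie in the span of their indicators, and [X n] is orthogonal to all of these
   indicators.  The span is an algebra, so E[S_n X_n] and E[S_n^3 X_n] vanish. *)
Section fourth_moment_slln.
Context {R : realType} {d : measure_display} {T : measurableType d}.
Variables (P : probability T R) (F : nat -> set (set T)) (X : nat -> T -> R).
Hypothesis F_measurable : forall n A, F n A -> measurable A.
Hypothesis F_setI : forall n, setI_closed (F n).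
Hypothesis X_adapted : forall n t, (t < n)%N -> indic_span (F n) (X t).
Hypothesis X_orth : forall n A, F n A -> expect P (\1_A \* X n) = 0.
Hypothesis X_le1 : forall t w, `|X t w| <= 1.

Local Notation S := (partial_sum X).

Lemma indic_span_partial_sum n : indic_span (F n) (S n).
Proof. exact: indic_span_sum (fun i : 'I_n => X_adapted (ltn_ord i)). Qed.

Lemma increment_bounded t : bounded_measurable (X t).
Proof. exact: (indic_span_bounded (@F_measurable t.+1) (X_adapted (ltnSn t))). Qed.

Lemma partial_sum_bounded n : bounded_measurable (S n).
Proof. exact: (indic_span_bounded (@F_measurable n) (indic_span_partial_sum n)). Qed.

Local Hint Resolve increment_bounded partial_sum_bounded : core.

Lemma expect_partial_sumM n : expect P (S n \* X n) = 0.
Proof.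
exact: (expect_indic_spanM_eq0 (@F_measurable n) _ (@X_orth n)
  (indic_span_partial_sum n)).
Qed.

Lemma expect_partial_sum3M n : expect P ((fun w => S n w ^+ 3) \* X n) = 0.
Proof.
apply: (expect_indic_spanM_eq0 (@F_measurable n) (increment_bounded n) (@X_orth n)).
have Sn := indic_span_partial_sum n.
apply: (eq_indic_span (indic_spanM (@F_setI n) (indic_spanM (@F_setI n) Sn Sn) Sn)).
by move=> w /=; rewrite !exprSr expr0 mul1r.
Qed.

Lemma normr_partial_sum_le n w : `|S n w| <= n%:R.
Proof.
elim: n => [|n IH]; first by rewrite partial_sum0 /= normr0.
by rewrite partial_sumS /= (le_trans (ler_normD _ _))// -natr1 lerD.
Qed.

Lemma second_moment_partial_sum n : expect P (fun w => S n w ^+ 2) <= n%:R.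
Proof.
elim: n => [|n IH].
  by under eq_fun do rewrite partial_sum0 /= expr0n; rewrite expect_cst.
apply: (@le_trans _ _ (expect P
    ((fun w => S n w ^+ 2) \+ (fun w => 2 * (S n \* X n) w) \+ cst 1))).
  apply: expect_le => [||w]; try solve_bounded.
  have x2 : X n w ^+ 2 <= 1 by rewrite -real_normK ?num_real// exprn_ile1.
  by rewrite /= partial_sumS /=; lra.
rewrite !expectD ?expectZ ?expect_partial_sumM ?expect_cst -?natr1; try solve_bounded.
lra.
Qed.

Lemma fourth_moment_partial_sum n :
  expect P (fun w => S n w ^+ 4) <= 6 * n%:R ^+ 2.
Proof.
elim: n => [|n IH].
  by under eq_fun do rewrite partial_sum0 /= expr0n; rewrite expect_cst expr0n mulr0.
apply: (@le_trans _ _ (expect P ((fun w => S n w ^+ 4) \+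
    (fun w => 4 * ((fun w => S n w ^+ 3) \* X n) w) \+
    (fun w => 6 * S n w ^+ 2) \+ cst (4 * n%:R + 1)))).
  apply: expect_le => [||w]; try solve_bounded.
  have x2 : X n w ^+ 2 <= 1 by rewrite -real_normK ?num_real// exprn_ile1.
  have sx3 : S n w * X n w ^+ 3 <= n%:R.
    rewrite (le_trans (ler_norm _))// normrM normrX.
    by rewrite (le_trans _ (normr_partial_sum_le n w))// ler_piMr// exprn_ile1.
  rewrite /= partial_sumS /=; set s := S n w in sx3 *; set x := X n w in x2 sx3 *.
  have s2x2 : s ^+ 2 * x ^+ 2 <= s ^+ 2 by rewrite ler_piMr ?sqr_ge0.
  have x4 : x ^+ 4 <= 1 by rewrite -[4%N]/(2 * 2)%N exprM exprn_ile1 ?sqr_ge0.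
  have -> : (s + x) ^+ 4 = s ^+ 4 + 4 * (s ^+ 3 * x) + 6 * (s ^+ 2 * x ^+ 2)
    + 4 * (s * x ^+ 3) + x ^+ 4 by ring.
  lra.
have S2 := second_moment_partial_sum n.
have n0 : 0 <= n%:R :> R by [].
rewrite !expectD ?expectZ ?expect_partial_sum3M ?expect_cst -?natr1; try solve_bounded.
nra.
Qed.

Lemma measurable_partial_sum_lt n c : measurable [set w | S n w < c].
Proof. by apply: measurable_ltr => //; case: (partial_sum_bounded n). Qed.

Lemma markov_fourth_moment n (c : R) : 0 <= c ->
  c ^+ 4 * fine (P [set w | S n w < - c]) <= 6 * n%:R ^+ 2.
Proof.
move=> c0; have mA := measurable_partial_sum_lt n (- c).
rewrite -expect_indic// -expectZ; last exact: bounded_measurable_indic.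
apply: le_trans (fourth_moment_partial_sum n).
apply: expect_le => [||w]; try solve_bounded; first exact: bounded_measurable_indic.
have S4 : S n w ^+ 4 = (- S n w) ^+ 4 by rewrite -[4%N]/(2 * 2)%N !exprM sqrrN.
rewrite indicE; case: (boolP (w \in _)) => [/set_mem /= wA|_].
  have cS : c <= - S n w by rewrite ltW// ltrNr.
  by rewrite mulr1 S4 ler_pXn2r ?nnegrE// (le_trans c0 cS).
by rewrite mulr0 S4 -[4%N]/(2 * 2)%N exprM sqr_ge0.
Qed.

Lemma prob_partial_sum_lt (eps : R) n : 0 < eps ->
  (P [set w | (S n w < - (eps * n%:R))%R] <= (24 / eps ^+ 4 / (n.+1)%:R ^+ 2)%:E)%E.
Proof.
move=> e0; have e4 : 0 < eps ^+ 4 by rewrite exprn_gt0.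
case: n => [|n].
  rewrite (_ : [set w | _] = set0) ?measure0 ?lee_fin ?divr_ge0 ?ltW//.
  by apply/seteqP; split => w //=; rewrite partial_sum0 /= mulr0 oppr0 ltxx.
have mA := measurable_partial_sum_lt n.+1 (- (eps * n.+1%:R)).
rewrite -(fineK (fin_num_measure P _ mA)) lee_fin.
have := markov_fourth_moment n.+1 (ltW (mulr_gt0 e0 (ltr0Sn _ n))).
rewrite -[(n.+2)%:R]natr1.
set q := fine _; set m := n.+1%:R; have m1 : 1 <= m by rewrite ler1n.
have q0 : 0 <= q by rewrite fine_ge0.
have m2 : 0 < m ^+ 2 by rewrite exprn_gt0// (lt_le_trans ltr01).
move=> markov.
have qm : eps ^+ 4 * m ^+ 2 * q <= 6.
  rewrite -(ler_pM2r m2); apply: le_trans markov.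
  by have -> : eps ^+ 4 * m ^+ 2 * q * m ^+ 2 = (eps * m) ^+ 4 * q by ring.
rewrite ler_pdivlMr ?exprn_gt0 ?ltr_wpDr ?(lt_le_trans ltr01)// ler_pdivlMr//.
have m4 : (m + 1) ^+ 2 <= 4 * m ^+ 2 by nra.
apply: (@le_trans _ _ (q * (4 * m ^+ 2) * eps ^+ 4)).
  by apply: ler_wpM2r; [exact: ltW | exact: ler_wpM2l].
have -> : q * (4 * m ^+ 2) * eps ^+ 4 = 4 * (eps ^+ 4 * m ^+ 2 * q) by ring.
lra.
Qed.

Lemma summable_prob_partial_sum_lt (eps : R) : 0 < eps ->
  (\sum_(n <oo) P [set w | (S n w < - (eps * n%:R))%R] < +oo)%E.
Proof.
move=> e0; set c := 24 / eps ^+ 4.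
have c0 : 0 <= c by rewrite divr_ge0// exprn_ge0// ltW.
apply: (@le_lt_trans _ _ (2 * c)%:E); last exact: ltry.
apply: lime_le; first by apply: is_cvg_nneseries => n _ _; exact: measure_ge0.
apply: nearW => k /=; rewrite big_mkord.
apply: (@le_trans _ _ (\sum_(i < k) (c / (i.+1)%:R ^+ 2)%:E)%E).
  by apply: lee_sum => i _; exact: prob_partial_sum_lt.
rewrite sumEFin lee_fin -mulr_sumr mulrC ler_wpM2r//.
by rewrite (le_trans (sum_inv_sqr_le k))// gerBl divr_ge0.
Qed.

Lemma ae_partial_sum_ge_eps (eps : R) : 0 < eps ->
  {ae P, forall w, exists N, forall n, (N <= n)%N -> - (eps * n%:R) <= S n w}.
Proof.
move=> e0; set A := fun n => [set w | (S n w < - (eps * n%:R))%R].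
have mA n : measurable (A n) by exact: measurable_partial_sum_lt.
exists (lim_sup_set A); split.
- by apply: bigcapT_measurable => k; apply: bigcup_measurable => j _; exact: mA.
- exact: lim_sup_set_cvg0 mA (summable_prob_partial_sum_lt e0).
move=> w /= ev n _; apply: contrapT => Anw; apply: ev; exists n => j nj.
by rewrite leNgt; apply/negP => Ajw; apply: Anw; exists j.
Qed.

Lemma ae_partial_sum_ge : {ae P, forall w (eps : R), 0 < eps ->
  exists N, forall n, (N <= n)%N -> - (eps * n%:R) <= S n w}.
Proof.
have k_gt0 k : 0 < (k.+1%:R : R)^-1 by rewrite invr_gt0 ltr0n.
apply: filterS (ae_foralln (fun k => ae_partial_sum_ge_eps (k_gt0 k))) => w ev eps e0.
set k := Num.truncn eps^-1.
have [N evN] := ev k; exists N => n /evN; apply: le_trans.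
rewrite lerN2 ler_wpM2r// ltW// -[eps]invrK ltf_pV2 ?posrE ?invr_gt0//.
exact: truncnS_gt.
Qed.

End fourth_moment_slln.

Lemma le_limn_einf {R : realType} (u : nat -> R) (c : R) :
  (forall e, 0 < e -> exists N, forall n, (N <= n)%N -> c - e <= u n) ->
  (c%:E <= limn_einf (fun n => (u n)%:E))%E.
Proof.
move=> ev; apply/lee_addgt0Pr => e e0; have [N evN] := ev e e0.
have ce : ((c - e)%:E <= limn_einf (fun n => (u n)%:E))%E.
  rewrite limn_einf_lim; apply: lime_ge; first exact: is_cvg_einfs.
  exists N => // m /= Nm; apply: le_ereal_inf_tmp => _ [k /= mk <-].
  by rewrite lee_fin evN// (leq_trans Nm mk).
by have := leeD2r e%:E ce; rewrite -EFinD subrK.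
Qed.

Lemma ae_threshold_ge {R : realType} {d : measure_display} {T : measurableType d}
    (P : probability T R) (G : R -> R) (lamb : R) (lam : nat -> T -> R) :
  {in `[0, 1] &, forall x y, x < y -> G x < G y} -> lamb \in `[0, 1] ->
  (forall t w, 0 <= lam t w <= 1) ->
  (forall t, {ae P, forall w, G lamb <= G (lam t w)}) ->
  {ae P, forall w t, lamb <= lam t w}.
Proof.
move=> /le_mono_in Gmono lamb01 lam01 power.
apply: filterS (ae_foralln power) => w Gw t.
by rewrite -Gmono// in_itv /= lam01.
Qed.

Lemma normr_indic_diff_le1 {R : realType} {T : Type} (B C : set T) (c : R) w :
  0 <= c <= 1 -> `|\1_B w - c * \1_C w| <= 1.
Proof.
move=> /andP[c0 c1]; rewrite !indicE.
by case: (w \in B); case: (w \in C); rewrite /= ler_norml; apply/andP; split; lra.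
Qed.

Section stationary_model.
Context {R : realType} {d : measure_display} {T : measurableType d}.
Variables (P : probability T R) (pi lamb : R).
Variables (Y : nat -> T -> bool) (p lam : nat -> T -> R).
Hypothesis pi01 : 0 <= pi <= 1.
Hypothesis lamb01 : 0 <= lamb <= 1.
Hypothesis mY : forall t, measurable [set w | Y t w = true].
Hypothesis mp : forall t, measurable_fun setT (p t).
Hypothesis mlam : forall t, measurable_fun setT (lam t).
Hypothesis iid : forall n (bs : nat -> bool),
  P [set w | forall s, (s < n)%N -> Y s w = bs s] =
  (\prod_(s < n) (if bs s then 1 - pi else pi))%:E.
Hypothesis null_pval_uniform : forall t A, cond_sigma Y p lam t A ->
  P (A `&` [set w | Y t w = false] `&` [set w | p t w <= lamb]) =
  (lamb%:E * P (A `&` [set w | Y t w = false]))%E.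

Definition null_state t := [set w | Y t w = false].
Definition null_pval_le t := null_state t `&` [set w | p t w <= lamb].
Definition pval_noise t w := \1_(null_pval_le t) w - lamb * \1_(null_state t) w.
Definition state_noise t w := \1_(null_state t) w - pi.

Lemma measurable_state t : measurable_fun setT (Y t).
Proof. by apply: (measurable_fun_bool true); rewrite setTI; exact: mY. Qed.

Lemma measurable_state_eq t b : measurable [set w | Y t w = b].
Proof.
rewrite -[X in measurable X]setTI.
exact: (measurable_state t measurableT (_ : measurable [set b])).
Qed.

Lemma measurable_null_pval_le t : measurable (null_pval_le t).
Proof. by apply: measurableI; [exact: measurable_state_eq | exact: measurable_ler]. Qed.

Lemma state_noiseE t : state_noise t = fun w => \1_(null_state t) w - pi * \1_setT w.
Proof. by apply: funext => w; rewrite /state_noise indicT mulr1. Qed.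

Lemma normr_pval_noise_le1 t w : `|pval_noise t w| <= 1.
Proof. exact: normr_indic_diff_le1. Qed.

Lemma normr_state_noise_le1 t w : `|state_noise t w| <= 1.
Proof. by rewrite state_noiseE; exact: normr_indic_diff_le1. Qed.

Lemma cond_sigma_measurable t A : cond_sigma Y p lam t A -> measurable A.
Proof.
apply: smallest_sub; first exact: sigma_algebra_measurable.
move=> B [[s [b ->]] | [[[s [x [_ ->]]] | [s [x [_ ->]]]] | [s [_ ->]]]].
- exact: measurable_state_eq.
- exact: measurable_ler.
- exact: measurable_ler.
- exact: measurable_ler.
Qed.

Lemma cond_sigmaI t : setI_closed (cond_sigma Y p lam t).
Proof. exact: (@measurableI _ (g_sigma_algebraType _)). Qed.

Lemma cond_sigmaT t : cond_sigma Y p lam t setT.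
Proof. exact: (@measurableT _ (g_sigma_algebraType _)). Qed.

Lemma cond_sigma_null_state s t : cond_sigma Y p lam t (null_state s).
Proof. by apply: sub_sigma_algebra; left; exists s, false. Qed.

Lemma cond_sigma_null_pval_le s t : (s < t)%N -> cond_sigma Y p lam t (null_pval_le s).
Proof.
move=> st; apply: cond_sigmaI; first exact: cond_sigma_null_state.
by apply: sub_sigma_algebra; right; left; left; exists s, lamb.
Qed.

Lemma pval_noise_span t s : (s < t)%N -> indic_span (cond_sigma Y p lam t) (pval_noise s).
Proof.
move=> st; have Z : indic_span (cond_sigma Y p lam t) (\1_(null_pval_le s) : T -> R).
  by apply: indic_span_indic; exact: cond_sigma_null_pval_le.
have N : indic_span (cond_sigma Y p lam t) (fun w => - lamb * \1_(null_state s) w).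
  by apply/indic_spanZ/indic_span_indic; exact: cond_sigma_null_state.
by apply: (eq_indic_span (indic_spanD Z N)) => w; rewrite /pval_noise /= mulNr.
Qed.

Lemma expect_indicM_pval_noise t A :
  cond_sigma Y p lam t A -> expect P (\1_A \* pval_noise t) = 0.
Proof.
move=> sA; have mA := cond_sigma_measurable sA.
rewrite expect_indicM_diff//;
  [|exact: measurable_null_pval_le|exact: measurable_state_eq].
rewrite /null_pval_le setIA null_pval_uniform// fineM ?subrr//.
by apply: fin_num_measure; apply: measurableI => //; exact: measurable_state_eq.
Qed.

Definition state_prefix n w : {ffun 'I_n -> bool} := [ffun s : 'I_n => Y s w].
Definition cylinder n (bs : {ffun 'I_n -> bool}) := [set w | state_prefix n w = bs].
(* [set0] makes the family closed under intersection. *)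
Definition cylinders n : set (set T) :=
  [set A | A = set0 \/ exists bs : {ffun 'I_n -> bool}, A = cylinder bs].

Lemma cylinderE n (bs : {ffun 'I_n -> bool}) : cylinder bs =
  [set w | forall s, (s < n)%N -> Y s w = nth false (fgraph bs) s].
Proof.
apply/seteqP; split => w /=.
  by move=> <- s sn; rewrite -[s]/(val (Ordinal sn)) nth_fgraph_ord ffunE.
by move=> Yw; apply/ffunP => s; rewrite ffunE Yw ?nth_fgraph_ord.
Qed.

Lemma measurable_cylinder n (bs : {ffun 'I_n -> bool}) : measurable (cylinder bs).
Proof.
rewrite cylinderE (_ : [set w | _] =
    \bigcap_s [set w | (s < n)%N -> Y s w = nth false (fgraph bs) s]).
  apply: bigcapT_measurable => s; case: (ltnP s n) => sn.
    rewrite (_ : [set w | _] = [set w | Y s w = nth false (fgraph bs) s]).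
      exact: measurable_state_eq.
    by apply/seteqP; split => w /=; [apply|move=> ? _].
  rewrite (_ : [set w | _] = setT)//.
  by apply/seteqP; split => w //= _; rewrite ltnNge sn.
by apply/seteqP; split => w /= Yw s; [move=> _; exact: Yw|exact: Yw].
Qed.

Lemma cylinders_measurable n A : cylinders n A -> measurable A.
Proof. by case=> [->|[bs ->]] //; exact: measurable_cylinder. Qed.

Lemma cylindersI n : setI_closed (cylinders n).
Proof.
move=> A B [->|[bs ->]]; first by left; rewrite set0I.
move=> [->|[bs' ->]]; first by left; rewrite setI0.
have [<-|bsbs'] := eqVneq bs' bs; first by right; exists bs'; rewrite setIid.
by left; apply/seteqP; split => w // [/= wbs wbs']; rewrite -wbs -wbs' eqxx in bsbs'.
Qed.

Lemma prob_cylinder n (bs : {ffun 'I_n -> bool}) :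
  P (cylinder bs) = (\prod_(s < n) (if bs s then 1 - pi else pi))%:E.
Proof.
by rewrite cylinderE iid; congr EFin; apply: eq_bigr => s _; rewrite nth_fgraph_ord.
Qed.

Lemma prob_cylinder_null n (bs : {ffun 'I_n -> bool}) : P (cylinder bs `&` null_state n) =
  (pi * \prod_(s < n) (if bs s then 1 - pi else pi))%:E.
Proof.
pose bs' s := if s == n then false else nth false (fgraph bs) s.
have -> : cylinder bs `&` null_state n =
    [set w | forall s, (s < n.+1)%N -> Y s w = bs' s].
  rewrite cylinderE; apply/seteqP; split => w /=.
    move=> [Yw Ynw] s; rewrite ltnS leq_eqVlt => /orP[/eqP ->|sn].
      by rewrite /bs' eqxx.
    by rewrite /bs' /= ltn_eqF// Yw.
  move=> Yw; split; last by rewrite /null_state /= Yw// /bs' /= eqxx.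
  by move=> s sn; rewrite Yw 1?ltnW// /bs' /= ltn_eqF.
rewrite iid big_ord_recr /= /bs' /= eqxx mulrC; congr (_ * _)%:E.
by apply: eq_bigr => s _; rewrite ltn_eqF// nth_fgraph_ord.
Qed.

Lemma indic_span_prefix n (g : {ffun 'I_n -> bool} -> R) :
  indic_span (cylinders n) (fun w => g (state_prefix n w)).
Proof.
have cyl (bs : {ffun 'I_n -> bool}) : cylinders n (cylinder bs) by right; exists bs.
apply: (eq_indic_span (indic_span_sum (index_enum _)
  (fun bs => indic_spanZ (g bs) (indic_span_indic (cyl bs))))) => w /=.
rewrite (bigD1 (state_prefix n w))//= big1 ?addr0 => [|bs bsw].
  by rewrite indicE mem_set ?mulr1.
by rewrite indicE memNset ?mulr0// => /esym; apply/eqP.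
Qed.

Lemma state_noise_span n t : (t < n)%N -> indic_span (cylinders n) (state_noise t).
Proof.
move=> tn.
apply: (eq_indic_span (indic_span_prefix (fun bs => (~~ bs (Ordinal tn))%:R - pi))).
move=> w; rewrite /state_noise ffunE indicE /=.
by case: (boolP (Y t w)) => [Yt|/negbTE Yt];
  [rewrite memNset// /null_state /= Yt|rewrite mem_set].
Qed.

Lemma expect_indicM_state_noise n A :
  cylinders n A -> expect P (\1_A \* state_noise n) = 0.
Proof.
move=> cA; have mA := cylinders_measurable cA.
rewrite state_noiseE expect_indicM_diff// ?setIT; last exact: measurable_state_eq.
case: cA => [->|[bs ->]]; first by rewrite set0I measure0 mulr0 subrr.
by rewrite prob_cylinder_null prob_cylinder subrr.
Qed.

Lemma prob_null_state t : fine (P (null_state t)) = pi.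
Proof.
(* The state noise is orthogonal to 1, which is a sum of cylinder indicators. *)
have one : indic_span (cylinders t) (\1_setT : T -> R).
  by apply: (eq_indic_span (indic_span_prefix (fun=> 1))) => w; rewrite indicT.
have bX := indic_span_bounded (@cylinders_measurable t.+1) (state_noise_span (ltnSn t)).
have := expect_indic_spanM_eq0 (@cylinders_measurable t) bX
  (@expect_indicM_state_noise t) one.
rewrite state_noiseE expect_indicM_diff// ?setTI ?setIT ?probability_setT /= ?mulr1;
  last exact: measurable_state_eq.
by move=> /eqP; rewrite subr_eq0 => /eqP.
Qed.

Lemma prob_null_pval_le t : fine (P (null_pval_le t)) = lamb * pi.
Proof.
have := null_pval_uniform (@cond_sigmaT t); rewrite !setTI => ->.
by rewrite fineM ?prob_null_state// fin_num_measure//; exact: measurable_state_eq.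
Qed.

Definition forced_false_pos : nat -> T -> R := partial_sum (fun t => \1_(null_pval_le t)).

Lemma forced_false_posE n w : forced_false_pos n w =
  partial_sum pval_noise n w + lamb * partial_sum state_noise n w + lamb * pi * n%:R.
Proof.
rewrite /forced_false_pos; elim: n => [|n IH]; first by rewrite !partial_sum0 /=; ring.
by rewrite !partial_sumS /= IH -natr1 /pval_noise /state_noise; ring.
Qed.

Lemma ae_forced_false_pos_ge : {ae P, forall w (eps : R), 0 < eps ->
  exists N, forall n, (N <= n)%N -> (lamb * pi - eps) * n%:R <= forced_false_pos n w}.
Proof.
have ae1 := ae_partial_sum_ge cond_sigma_measurable cond_sigmaI pval_noise_span
  expect_indicM_pval_noise normr_pval_noise_le1.
have ae2 := ae_partial_sum_ge cylinders_measurable cylindersI state_noise_span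
  expect_indicM_state_noise normr_state_noise_le1.
apply: filterS2 ae1 ae2 => w ev1 ev2 eps e0; have e2 : 0 < eps / 2 by rewrite divr_gt0.
have [N1 evN1] := ev1 _ e2; have [N2 evN2] := ev2 _ e2.
exists (maxn N1 N2) => n; rewrite geq_max => /andP[/evN1 S1 /evN2 S2].
rewrite forced_false_posE.
have n0 : 0 <= eps / 2 * n%:R by rewrite mulr_ge0// ltW.
case/andP: lamb01 => l0 l1; nra.
Qed.

Lemma false_pos_ge_forced n w : (forall t, lamb <= lam t w) ->
  forced_false_pos n w <= false_pos Y p lam n w.
Proof.
move=> lw; apply: ler_sum => t _; rewrite indicE.
case: (boolP (w \in _)) => [/set_mem [/= Yt pt]|_]; last by [].
by rewrite Yt /decision (le_trans pt (lw t)).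
Qed.

Lemma weighted_regret_ge_forced (a b : R) n w :
  0 <= a -> 0 <= b -> (forall t, lamb <= lam t w) ->
  a * forced_false_pos n w <= weighted_regret a b Y p lam n w.
Proof.
move=> a0 b0 lw; rewrite /weighted_regret -[leLHS]addr0 lerD ?mulr_ge0//.
  by rewrite ler_wpM2l// false_pos_ge_forced.
by apply: sumr_ge0 => t _.
Qed.

Lemma measurable_weighted_regret (a b : R) n :
  measurable_fun setT (weighted_regret a b Y p lam n).
Proof.
have natr_bool (f : T -> bool) : measurable_fun setT f ->
    measurable_fun setT (fun w => (f w)%:R : R).
  by move=> mf; apply: (measurableT_comp (f := fun b : bool => b%:R : R)).
have mdec t : measurable_fun setT (decision p lam t) by exact: measurable_fun_ler.
apply: measurable_funD; apply: measurable_funM => //; apply: measurable_sum => t;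
  apply: natr_bool.
  exact: measurable_and (measurable_neg (measurable_state t)) (mdec t).
exact: measurable_and (measurable_state t) (measurable_neg (mdec t)).
Qed.

Hypothesis lam_ge : {ae P, forall w t, lamb <= lam t w}.

Lemma expected_regret_ge (a b : R) n : 0 <= a -> 0 <= b ->
  ((a * pi * lamb * n%:R)%:E <= \int[P]_w (weighted_regret a b Y p lam n w)%:E)%E.
Proof.
move=> a0 b0; have bZ t : bounded_measurable (\1_(null_pval_le t) : T -> R).
  exact/bounded_measurable_indic/measurable_null_pval_le.
have baZ := bounded_measurableZ a (bounded_measurable_partial_sum n bZ).
have -> : (a * pi * lamb * n%:R)%:E = 'E_P[fun w => (a * forced_false_pos n w)%R]%E.
  rewrite expectationE// expectZ ?expect_partial_sum//;
    last exact: bounded_measurable_partial_sum.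
  congr EFin.
  rewrite (eq_bigr (fun=> lamb * pi)) => [|t _].
    by rewrite sumr_const card_ord -mulr_natr; ring.
  by rewrite expect_indic ?prob_null_pval_le//; exact: measurable_null_pval_le.
rewrite [X in (_ <= X)%E](_ : _ = 'E_P[weighted_regret a b Y p lam n]%E); last first.
  by rewrite unlock.
apply: expectation_le => //.
- exact: baZ.1.
- exact: measurable_weighted_regret.
- by move=> w; rewrite mulr_ge0//; apply: sumr_ge0 => t _; rewrite indicE.
- by move=> w; rewrite addr_ge0// mulr_ge0//; apply: sumr_ge0.
- by apply: filterS lam_ge => w lw; exact: weighted_regret_ge_forced.
Qed.

Lemma liminf_regret_ge (a b : R) : 0 < a -> 0 <= b ->
  {ae P, forall w, ((a * pi * lamb)%:E <=
    limn_einf (fun n => (weighted_regret a b Y p lam n w / n%:R)%:E))%E}.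
Proof.
move=> a0 b0; apply: filterS2 lam_ge ae_forced_false_pos_ge => w lw mean.
apply: le_limn_einf => e e0; have [N evN] := mean (e / a) (divr_gt0 e0 a0).
exists (maxn N 1) => n; rewrite geq_max => /andP[/evN Zn n1].
rewrite ler_pdivlMr ?ltr0n//.
apply: le_trans _ (weighted_regret_ge_forced n (ltW a0) b0 lw).
have -> : (a * pi * lamb - e) * n%:R = a * ((lamb * pi - e / a) * n%:R).
  by field; rewrite gt_eqF.
by rewrite ler_wpM2l// ltW.
Qed.

End stationary_model.

Theorem theorem1 (R : realType) (d : measure_display) (T : measurableType d)
  (P : probability T R) (pi : R) (G : R -> R) (beta lamb : R)
  (Y : nat -> T -> bool) (p lam : nat -> T -> R) :
  0 < pi < 1 ->
  {within `[(0:R), 1], continuous G} ->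
  {in `[(0:R), 1] &, forall x y, x < y -> G x < G y} ->
  G 0 = 0 -> G 1 = 1 ->
  0 < beta <= 1 ->
  lamb \in `[0, 1] -> G lamb = beta ->
  stationary_protocol P pi G Y p lam ->
  (forall t, {ae P, forall w, beta <= G (lam t w)}) ->
  forall a b : R, 0 < a -> 0 < b ->
  (forall n : nat, (1 <= n)%N ->
     (\int[P]_w (weighted_regret a b Y p lam n w)%:E >= (a * pi * lamb * n%:R)%:E)%E) /\
  {ae P, forall w,
     ((a * pi * lamb)%:E <=
      limn_einf (fun n : nat => (weighted_regret a b Y p lam n w / n%:R)%:E))%E}.
Proof.
move=> /andP[pi0 pi1] _ Gmono _ _ _ lambI Glamb.
move=> [mY [mp [mlam [_ [lam01 [iid [_ pval_law]]]]]]] power a b a0 b0.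
have pi01 : 0 <= pi <= 1 by rewrite !ltW.
have lamb01 : 0 <= lamb <= 1 by move: lambI; rewrite in_itv.
have null_uniform t A (sA : cond_sigma Y p lam t A) := (pval_law t A lamb sA lamb01).1.
have lam_ge : {ae P, forall w t, lamb <= lam t w}.
  by apply: ae_threshold_ge Gmono lambI lam01 _; rewrite Glamb.
split => [n _|].
  exact: (expected_regret_ge mY mp mlam iid null_uniform lam_ge n (ltW a0) (ltW b0)).
exact: (liminf_regret_ge pi01 lamb01 mY mp mlam iid null_uniform lam_ge a0 (ltW b0)).
Qed.
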